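(* Let $(X,\rho)$ be a metric space and let $(A_k)\subset CL(X)$. Then for every unbounded modulus $f\colon[0,\infty)\to[0,\infty)$, the $f$-Wijsman statistical limit of $(A_k)$ is unique if it exists; i.e., if $(A_k)$ is $f$-Wijsman statistically convergent to $A\in CL(X)$ and to $B\in CL(X)$, then $A=B$.
   Context: A modulus is a function $f\colon[0,\infty)\to[0,\infty)$ such that $f(x)=0$ iff $x=0$, $f$ is subadditive, increasing and continuous. $CL(X)$ denotes the set of all non-empty closed subsets of $(X,\rho)$, and $d(x,B)=\inf_{y\in B}\rho(x,y)$. For an unbounded modulus $f$ and $K\subseteq\mathbb N$, the $f$-density is $d^f(K)=\lim_{n\to\infty}\frac{f(|\{k\le n:k\in K\}|)}{f(n)}$ (when the limit exists). A real sequence $(x_k)$ is $f$-statistically convergent to $l$ if for every $\varepsilon>0$ the set $\{k:|x_k-l|\ge\varepsilon\}$ has $f$-density $0$. $(A_k)\subset CL(X)$ is $f$-Wijsman statistically convergent to $A\in CL(X)$ if for every $x\in X$ the sequence $(d(x,A_k))$ is $f$-statistically convergent to $d(x,A)$. *)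

From Stdlib Require Import Reals Lra ClassicalDescription.
From Coquelicot Require Import Coquelicot.
Open Scope R_scope.

Definition is_metric {X : Type} (rho : X -> X -> R) : Prop :=
  (forall x y, 0 <= rho x y) /\
  (forall x y, rho x y = 0 <-> x = y) /\
  (forall x y, rho x y = rho y x) /\
  (forall x y z, rho x z <= rho x y + rho y z).

Definition metric_closed {X : Type} (rho : X -> X -> R) (A : X -> Prop) : Prop :=
  forall x, (forall eps, 0 < eps -> exists y, A y /\ rho x y < eps) -> A x.

Definition in_CL {X : Type} (rho : X -> X -> R) (A : X -> Prop) : Prop :=
  (exists a, A a) /\ metric_closed rho A.

Definition dist_set {X : Type} (rho : X -> X -> R) (x : X) (B : X -> Prop) : R :=
  real (Glb_Rbar (fun r => exists y, B y /\ r = rho x y)).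

(* modulus f : [0,oo) -> [0,oo) (given as a function R -> R; only values on [0,oo) matter) *)
Definition is_modulus (f : R -> R) : Prop :=
  (forall x, 0 <= x -> 0 <= f x) /\
  (forall x, 0 <= x -> (f x = 0 <-> x = 0)) /\
  (forall x y, 0 <= x -> 0 <= y -> f (x + y) <= f x + f y) /\
  (forall x y, 0 <= x -> x <= y -> f x <= f y) /\
  (forall x, 0 <= x ->
     filterlim f (within (fun y => 0 <= y) (locally x)) (locally (f x))).

Definition unbounded_modulus (f : R -> R) : Prop :=
  is_modulus f /\ forall M, exists x, 0 <= x /\ M < f x.

(* number of k < n with P k; sequences are indexed from 0, so the paper's
   index set {1,...,n} corresponds to {0,...,n-1}. *)
Fixpoint count_upto (P : nat -> Prop) (n : nat) : nat :=
  match n with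
  | O => O
  | S m => (count_upto P m + (if excluded_middle_informative (P m) then 1 else 0))%nat
  end.

Definition f_density_zero (f : R -> R) (K : nat -> Prop) : Prop :=
  is_lim_seq (fun n => f (INR (count_upto K n)) / f (INR n)) 0.

Definition f_stat_conv (f : R -> R) (x : nat -> R) (l : R) : Prop :=
  forall eps, 0 < eps -> f_density_zero f (fun k => Rabs (x k - l) >= eps).

Definition f_wijsman_stat_conv {X : Type} (rho : X -> X -> R) (f : R -> R)
  (A_ : nat -> X -> Prop) (A : X -> Prop) : Prop :=
  forall x, f_stat_conv f (fun k => dist_set rho x (A_ k)) (dist_set rho x A).

(* Two limits of the distance sequence (d(x, A_k))_k would, for a small
   enough eps, make the two exceptional sets cover every index; subadditivity
   and monotonicity of f then force f-density ratios summing to at least 1,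
   so they cannot both tend to 0.  Hence d(x, A) = d(x, B) for every x, and
   a closed set is the zero set of its distance function. *)

From Stdlib Require Import Reals Lra Lia FunctionalExtensionality PropExtensionality
  Classical_Prop ClassicalDescription.
From Coquelicot Require Import Coquelicot.
Open Scope R_scope.

Section DistSet.

Variables (X : Type) (rho : X -> X -> R).
Hypothesis Hrho : is_metric rho.

Lemma dist_set_Glb (x : X) (B : X -> Prop) :
  (exists b, B b) ->
  Glb_Rbar (fun r => exists y, B y /\ r = rho x y) = Finite (dist_set rho x B).
Proof.
  intros [b Hb]; unfold dist_set.
  destruct (Glb_Rbar_correct (fun r => exists y, B y /\ r = rho x y)) as [Hlb Hglb].
  assert (H0 : Rbar_le 0 (Glb_Rbar (fun r => exists y, B y /\ r = rho x y))).
  { apply Hglb; intros r [y [_ ->]]; apply Hrho. }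
  assert (H1 : Rbar_le (Glb_Rbar (fun r => exists y, B y /\ r = rho x y)) (rho x b)).
  { apply Hlb; exists b; auto. }
  destruct (Glb_Rbar _); simpl in *; easy.
Qed.

Lemma dist_set_mem (x : X) (B : X -> Prop) : B x -> dist_set rho x B = 0.
Proof.
  intros Hx.
  assert (Hxx : rho x x = 0) by (apply Hrho; reflexivity).
  assert (Hnonneg : Rbar_le 0 (Glb_Rbar (fun r => exists y, B y /\ r = rho x y))).
  { apply Glb_Rbar_correct; intros r [y [_ ->]]; apply Hrho. }
  assert (Hle : Rbar_le (Glb_Rbar (fun r => exists y, B y /\ r = rho x y)) 0).
  { rewrite <- Hxx; apply Glb_Rbar_correct; exists x; auto. }
  rewrite dist_set_Glb in Hnonneg, Hle by eauto; simpl in *; lra.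
Qed.

Lemma dist_set_eq0_closed (x : X) (B : X -> Prop) :
  in_CL rho B -> dist_set rho x B = 0 -> B x.
Proof.
  intros [Hne Hcl] H0; apply Hcl; intros eps Heps.
  apply NNPP; intros Hfar.
  assert (Hlb : Rbar_le eps (Glb_Rbar (fun r => exists y, B y /\ r = rho x y))).
  { apply Glb_Rbar_correct; intros r [y [Hy ->]]; simpl.
    apply Rnot_lt_le; intros Hlt; apply Hfar; eauto. }
  rewrite dist_set_Glb, H0 in Hlb by assumption; simpl in Hlb; lra.
Qed.

Lemma in_CL_eq_of_dist_set_eq (A B : X -> Prop) :
  in_CL rho A -> in_CL rho B ->
  (forall x, dist_set rho x A = dist_set rho x B) -> A = B.
Proof.
  intros HA HB Hd; apply functional_extensionality; intros x.
  apply propositional_extensionality; split; intros Hx.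
  - apply dist_set_eq0_closed; [easy|]; rewrite <- Hd; exact (dist_set_mem x A Hx).
  - apply dist_set_eq0_closed; [easy|]; rewrite Hd; exact (dist_set_mem x B Hx).
Qed.

End DistSet.

Lemma count_upto_or (P Q : nat -> Prop) (n : nat) :
  (forall k, P k \/ Q k) -> (n <= count_upto P n + count_upto Q n)%nat.
Proof.
  intros HPQ; induction n as [|n IH]; simpl; [lia|].
  destruct (excluded_middle_informative (P n));
    destruct (excluded_middle_informative (Q n)); try lia.
  destruct (HPQ n); tauto.
Qed.

Section Modulus.

Variable f : R -> R.
Hypothesis Hf : is_modulus f.

Lemma modulus_INR_gt0 (n : nat) : (1 <= n)%nat -> 0 < f (INR n).
Proof.
  intros Hn; destruct Hf as [Hge0 [Heq0 _]].
  assert (Hn0 : 0 <= INR n) by apply pos_INR.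
  destruct (Hge0 _ Hn0) as [|Hfn]; [easy|].
  apply le_INR in Hn; simpl in Hn.
  assert (INR n = 0) by (apply (Heq0 _ Hn0); auto); lra.
Qed.

Lemma modulus_ratio_sum_ge1 (n c1 c2 : nat) : (1 <= n)%nat -> (n <= c1 + c2)%nat ->
  1 <= f (INR c1) / f (INR n) + f (INR c2) / f (INR n).
Proof.
  intros Hn Hc; pose proof (modulus_INR_gt0 n Hn) as Hfn.
  destruct Hf as [_ [_ [Hsub [Hmono _]]]].
  assert (Hfc : f (INR n) <= f (INR c1) + f (INR c2)).
  { apply Rle_trans with (f (INR (c1 + c2))).
    - apply Hmono; [apply pos_INR | apply le_INR, Hc].
    - rewrite plus_INR; apply Hsub; apply pos_INR. }
  rewrite <- Rdiv_plus_distr; apply Rle_div_r; lra.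
Qed.

Lemma f_density_zero_not_cover (P Q : nat -> Prop) :
  (forall k, P k \/ Q k) -> f_density_zero f P -> f_density_zero f Q -> False.
Proof.
  intros HPQ HP HQ.
  assert (Hle : Rbar_le 1 (0 + 0)).
  { apply (is_lim_seq_le_loc (fun _ => 1)
      (fun n => f (INR (count_upto P n)) / f (INR n)
              + f (INR (count_upto Q n)) / f (INR n))).
    - exists 1%nat; intros n Hn; apply modulus_ratio_sum_ge1, count_upto_or; auto.
    - apply is_lim_seq_const.
    - apply is_lim_seq_plus'; assumption. }
  simpl in Hle; lra.
Qed.

Lemma Rabs_ge_half_dist_or (a b y : R) :
  Rabs (y - a) >= Rabs (a - b) / 2 \/ Rabs (y - b) >= Rabs (a - b) / 2.
Proof.
  assert (Rabs (a - b) <= Rabs (y - a) + Rabs (y - b)).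
  { replace (a - b) with (- (y - a) + (y - b)) by ring.
    rewrite <- (Rabs_Ropp (y - a)); apply Rabs_triang. }
  lra.
Qed.

Lemma f_stat_conv_unique (x : nat -> R) (a b : R) :
  f_stat_conv f x a -> f_stat_conv f x b -> a = b.
Proof.
  intros Ha Hb; destruct (Req_dec a b) as [|Hab]; [easy|]; exfalso.
  assert (Heps : 0 < Rabs (a - b) / 2).
  { assert (0 < Rabs (a - b)) by (apply Rabs_pos_lt; intros H; apply Hab; lra); lra. }
  apply (f_density_zero_not_cover _ _ (fun k => Rabs_ge_half_dist_or a b (x k))).
  - exact (Ha _ Heps).
  - exact (Hb _ Heps).
Qed.

End Modulus.

Theorem corollary2p4 (X : Type) (rho : X -> X -> R) (Hrho : is_metric rho)
  (A_ : nat -> X -> Prop) (HA_ : forall k, in_CL rho (A_ k))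
  (f : R -> R) (Hf : unbounded_modulus f)
  (A B : X -> Prop) (HA : in_CL rho A) (HB : in_CL rho B) :
  f_wijsman_stat_conv rho f A_ A -> f_wijsman_stat_conv rho f A_ B -> A = B.
Proof.
  intros HconvA HconvB.
  apply (in_CL_eq_of_dist_set_eq X rho Hrho); [exact HA | exact HB |].
  intros x; apply (f_stat_conv_unique f (proj1 Hf) _ _ _ (HconvA x) (HconvB x)).
Qed.
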